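(* Let $(X,d_X)$ and $(\Lambda,d_\Lambda)$ be complete metric spaces and, for each $\lambda\in\Lambda$, let $S_\lambda(\cdot,\cdot)$ be a process on $X$. Suppose: (L1) for every $\lambda\in\Lambda$, $S_\lambda(\cdot,\cdot)$ has a pullback attractor $\mathscr A_\lambda(\cdot)=\{\mathscr A_\lambda(t):t\in\mathbb R\}$; and that one of the following two sets of hypotheses holds: (i) there is a compact set $D\subseteq X$ with $\mathscr A_\lambda(t)\subseteq D$ for every $\lambda\in\Lambda$ and every $t\in\mathbb R$, and for every $s\in\mathbb R$ and $t\ge s$ the map $\lambda\mapsto S_\lambda(t,s)x$ is continuous, uniformly for $x$ in compact subsets of $X$; or (ii) there is a bounded set $D\subseteq X$ with $\mathscr A_\lambda(t)\subseteq D$ for every $\lambda\in\Lambda$ and every $t\in\mathbb R$; for every $s\in\mathbb R$ and $t\ge s$ the map $\lambda\mapsto S_\lambda(t,s)x$ is continuous, uniformly for $x$ in bounded subsets of $X$; and for any $\lambda_0\in\Lambda$ and $t\in\mathbb R$ there exists $\delta>0$ such that $\overline{\bigcup_{\lambda\in B_\Lambda(\lambda_0,\delta)}\mathscr A_\lambda(t)}$ is compact, where $B_\Lambda(\lambda_0,\delta)=\{\lambda\in\Lambda: d_\Lambda(\lambda,\lambda_0)<\delta\}$. Then there exists a residual set $\Lambda_*\subseteq\Lambda$ such that for every $t\in\mathbb R$ the map $\lambda\mapsto\mathscr A_\lambda(t)$ (into the space of nonempty closed bounded subsets of $X$ with the Hausdorff metric) is continuous at each $\lambda\in\Lambda_*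$.
   Context: A process on a complete metric space $(X,d_X)$ is a two-parameter family of maps $S(t,s):X\to X$, $s\in\mathbb R$, $t\ge s$, such that $S(t,t)=\mathrm{id}$, $S(t,\tau)S(\tau,s)=S(t,s)$ for all $t\ge\tau\ge s$, and $S(t,s)x$ is continuous in $(x,t,s)$. For subsets $A,C$ of a metric space $Y$, the Hausdorff semi-distance is $\rho_Y(A,C)=\sup_{a\in A}\inf_{c\in C}d_Y(a,c)$ and the Hausdorff distance is $\Delta_Y(A,C)=\max(\rho_Y(A,C),\rho_Y(C,A))$; $CB(Y)$ denotes the set of nonempty closed bounded subsets of $Y$ with metric $\Delta_Y$. A family of compact sets $\mathscr A(\cdot)=\{\mathscr A(t):t\in\mathbb R\}$ is the pullback attractor of the process $S$ if (A1) $S(t,s)\mathscr A(s)=\mathscr A(t)$ for all $t\ge s$; (A2) for every bounded $B\subseteq X$ and $t\in\mathbb R$, $\rho_X(S(t,s)B,\mathscr A(t))\to0$ as $s\to-\infty$; (A3) if $C(\cdot)$ is any other family of compact sets satisfying (A1) and (A2) then $\mathscr A(t)\subseteq C(t)$ for all $t$. A subset of $\Lambda$ is residual if its complement is a countable union of nowhere dense sets. *)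

From Stdlib Require Import Reals.
Open Scope R_scope.

Section MetricDefs.
Context {T : Type} (d : T -> T -> R).

Definition is_metric : Prop :=
  (forall x y, 0 <= d x y) /\
  (forall x y, d x y = 0 <-> x = y) /\
  (forall x y, d x y = d y x) /\
  (forall x y z, d x z <= d x y + d y z).

Definition cauchy_seq (u : nat -> T) : Prop :=
  forall eps, 0 < eps -> exists N, forall m n, (N <= m)%nat -> (N <= n)%nat ->
    d (u m) (u n) < eps.

Definition seq_converges (u : nat -> T) (l : T) : Prop :=
  forall eps, 0 < eps -> exists N, forall n, (N <= n)%nat -> d (u n) l < eps.

Definition complete_metric : Prop :=
  is_metric /\ forall u, cauchy_seq u -> exists l, seq_converges u l.

Definition ball (x0 : T) (r : R) : T -> Prop := fun x => d x x0 < r.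

Definition subset (A B : T -> Prop) : Prop := forall x, A x -> B x.

Definition is_open (U : T -> Prop) : Prop :=
  forall x, U x -> exists e, 0 < e /\ subset (ball x e) U.

Definition is_compact (K : T -> Prop) : Prop :=
  forall (I : Type) (U : I -> T -> Prop),
    (forall i, is_open (U i)) ->
    (forall x, K x -> exists i, U i x) ->
    exists l : list I, forall x, K x -> exists i, List.In i l /\ U i x.

Definition is_bounded (A : T -> Prop) : Prop :=
  exists x0 r, forall a, A a -> d a x0 <= r.

Definition closure (A : T -> Prop) : T -> Prop :=
  fun x => forall eps, 0 < eps -> exists a, A a /\ d x a < eps.

Definition nowhere_dense (N : T -> Prop) : Prop :=
  ~ (exists x e, 0 < e /\ subset (ball x e) (closure N)).

Definition residual (L : T -> Prop) : Prop :=
  exists N : nat -> T -> Prop,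
    (forall n, nowhere_dense (N n)) /\
    (forall x, ~ L x <-> exists n, N n x).

(* "rho_T(A, C) < eps" unfolded: every point of A is within eps of C *)
Definition hsemi_small (A C : T -> Prop) (eps : R) : Prop :=
  forall a, A a -> exists c, C c /\ d a c < eps.

Definition hdist_small (A C : T -> Prop) (eps : R) : Prop :=
  hsemi_small A C eps /\ hsemi_small C A eps.

End MetricDefs.

Section Process.
Context {X : Type} (dX : X -> X -> R).

(* S t s : X -> X for s <= t (values for t < s are irrelevant) *)
Definition is_process (S : R -> R -> X -> X) : Prop :=
  (forall t x, S t t x = x) /\
  (forall t tau s x, s <= tau -> tau <= t -> S t tau (S tau s x) = S t s x) /\
  (forall x t s, s <= t -> forall eps, 0 < eps -> exists delta, 0 < delta /\
     forall x' t' s', s' <= t' -> dX x x' < delta -> Rabs (t - t') < delta ->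
       Rabs (s - s') < delta -> dX (S t s x) (S t' s' x') < eps).

Definition invariant (S : R -> R -> X -> X) (A : R -> X -> Prop) : Prop :=
  forall t s, s <= t -> forall y, A t y <-> exists x, A s x /\ y = S t s x.

Definition pullback_attracting (S : R -> R -> X -> X) (A : R -> X -> Prop) : Prop :=
  forall B, is_bounded dX B -> forall t eps, 0 < eps -> exists s0, forall s,
    s <= s0 -> s <= t ->
    hsemi_small dX (fun y => exists b, B b /\ y = S t s b) (A t) eps.

Definition is_pullback_attractor (S : R -> R -> X -> X) (A : R -> X -> Prop) : Prop :=
  (forall t, is_compact dX (A t)) /\
  invariant S A /\
  pullback_attracting S A /\
  (forall C : R -> X -> Prop,
     (forall t, is_compact dX (C t)) -> invariant S C -> pullback_attracting S C ->
     forall t, subset (A t) (C t)).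

End Process.

(* Fix a time q.  The sets S_lam(q, q - n) D contain A_lam(q), approach it in Hausdorff
   semi-distance as n grows, and depend continuously on lam.  A limit of such a family is
   always upper semicontinuous in lam; it is lower semicontinuous wherever lam lies in the
   interior of one of the closed sets on which the tail of the family is e-Cauchy, and by
   Baire's theorem these interiors form a residual set.  Intersecting over the times
   q = -k gives Lambda_*; continuity at an arbitrary t >= -k then follows from
   A_lam(t) = S_lam(t, -k) A_lam(-k) and uniform continuity of S_lam0(t, -k) on the
   compact set A_lam0(-k). *)

From Stdlib Require Import Reals Lra Lia Classical ClassicalEpsilon.
From Stdlib Require Cantor.
Open Scope R_scope.

Definition hsemi_le {T : Type} (d : T -> T -> R) (A C : T -> Prop) (e : R) : Prop :=
  forall eta, 0 < eta -> hsemi_small d A C (e + eta).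

Definition hcont_at {X L : Type} (dX : X -> X -> R) (dL : L -> L -> R)
    (G : L -> X -> Prop) (l0 : L) : Prop :=
  forall eps, 0 < eps -> exists delta, 0 < delta /\
    forall l, dL l l0 < delta -> hdist_small dX (G l) (G l0) eps.

Lemma list_upper_bound {I : Type} (f : I -> R) (l : list I) :
  exists M, forall i, List.In i l -> f i <= M.
Proof.
  induction l as [|a l [M HM]]; [exists 0; intros i []|].
  exists (Rmax (f a) M). intros i [<-|Hi]; [apply Rmax_l|].
  eapply Rle_trans; [apply HM, Hi | apply Rmax_r].
Qed.

Lemma list_pos_lower_bound {I : Type} (f : I -> R) (l : list I) :
  (forall i, 0 < f i) -> exists m, 0 < m /\ forall i, List.In i l -> m <= f i.
Proof.
  intros Hpos. induction l as [|a l [m [Hm HM]]]; [exists 1; split; [lra | intros i []]|].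
  exists (Rmin (f a) m). split; [apply Rmin_glb_lt; auto|].
  intros i [<-|Hi]; [apply Rmin_l|].
  eapply Rle_trans; [apply Rmin_r | apply HM, Hi].
Qed.

Section MetricFacts.
Context {T : Type} (d : T -> T -> R) (Hm : is_metric d).

Lemma dist_nonneg x y : 0 <= d x y.
Proof. apply Hm. Qed.

Lemma dist_refl x : d x x = 0.
Proof. apply Hm; reflexivity. Qed.

Lemma dist_sym x y : d x y = d y x.
Proof. apply Hm. Qed.

Lemma dist_triangle x y z : d x z <= d x y + d y z.
Proof. apply Hm. Qed.

Lemma ball_open x r : is_open d (ball d x r).
Proof.
  intros y Hy. exists (r - d y x). split; [unfold ball in Hy; lra|].
  intros z Hz. unfold ball in *. pose proof (dist_triangle z y x). lra.
Qed.

Lemma hsemi_small_mono A C e e' : e <= e' -> hsemi_small d A C e -> hsemi_small d A C e'.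
Proof. intros He H a Ha. destruct (H a Ha) as [c [Hc Hac]]. exists c; split; [exact Hc | lra]. Qed.

Lemma hsemi_small_sub_l A A' C e : subset A A' -> hsemi_small d A' C e -> hsemi_small d A C e.
Proof. intros HA H a Ha. exact (H a (HA a Ha)). Qed.

Lemma hsemi_small_of_subset A C e : 0 < e -> subset A C -> hsemi_small d A C e.
Proof. intros He HAC a Ha. exists a. split; [exact (HAC a Ha)|]. rewrite dist_refl. exact He. Qed.

Lemma hsemi_small_trans A B C e1 e2 :
  hsemi_small d A B e1 -> hsemi_small d B C e2 -> hsemi_small d A C (e1 + e2).
Proof.
  intros HAB HBC a Ha. destruct (HAB a Ha) as [b [Hb Hab]].
  destruct (HBC b Hb) as [c [Hc Hbc]]. exists c. split; [exact Hc|].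
  pose proof (dist_triangle a b c). lra.
Qed.

Lemma hsemi_le_small A C e e' : e < e' -> hsemi_le d A C e -> hsemi_small d A C e'.
Proof. intros He H. replace e' with (e + (e' - e)) by ring. apply H. lra. Qed.

Lemma compact_bounded (x0 : T) K : is_compact d K -> is_bounded d K.
Proof.
  intros HK. destruct (HK nat (fun n => ball d x0 (INR n))) as [l Hl].
  - intro n. apply ball_open.
  - intros x _. destruct (INR_unbounded (d x x0)) as [n Hn]. exists n. exact Hn.
  - destruct (list_upper_bound INR l) as [M HM]. exists x0, M. intros a Ha.
    destruct (Hl a Ha) as [i [Hi Hai]]. unfold ball in Hai. pose proof (HM i Hi). lra.
Qed.

(* Lebesgue-number argument: halve the radii of a finite subcover by balls of continuity. *)
Lemma compact_uniform_continuity (K : T -> Prop) (f : T -> T) : is_compact d K ->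
  (forall c, K c -> forall eps, 0 < eps -> exists delta, 0 < delta /\
      forall y, d c y < delta -> d (f c) (f y) < eps) ->
  forall eps, 0 < eps -> exists eta, 0 < eta /\
      forall c y, K c -> d c y < eta -> d (f c) (f y) < eps.
Proof.
  intros HK Hf eps Heps.
  destruct (choice (fun (i : {c | K c}) delta => 0 < delta /\
      forall y, d (proj1_sig i) y < delta -> d (f (proj1_sig i)) (f y) < eps / 2))
    as [del Hdel].
  { intros [c Hc]. apply Hf; [exact Hc | lra]. }
  assert (Hdel_pos : forall i, 0 < del i / 2) by (intro i; pose proof (proj1 (Hdel i)); lra).
  destruct (HK {c | K c} (fun i => ball d (proj1_sig i) (del i / 2))) as [l Hl].
  - intro i. apply ball_open.
  - intros x Hx. exists (exist _ x Hx). unfold ball; simpl. rewrite dist_refl. apply Hdel_pos.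
  - destruct (list_pos_lower_bound (fun i => del i / 2) l Hdel_pos) as [m [Hm_pos Hml]].
    exists m. split; [exact Hm_pos|]. intros c y Hc Hcy.
    destruct (Hl c Hc) as [i [Hi Hci]]. unfold ball in Hci. specialize (Hml i Hi). pose proof (Hdel_pos i).
    destruct (Hdel i) as [_ Hcont]. set (ci := proj1_sig i) in *.
    rewrite dist_sym in Hci.
    assert (Hc_near : d ci c < del i) by lra.
    assert (Hy_near : d ci y < del i) by (pose proof (dist_triangle ci c y); lra).
    pose proof (Hcont c Hc_near). pose proof (Hcont y Hy_near).
    pose proof (dist_triangle (f c) (f ci) (f y)). pose proof (dist_sym (f c) (f ci)). lra.
Qed.

Lemma nowhere_dense_subset N N' : subset N N' -> nowhere_dense d N' -> nowhere_dense d N.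
Proof.
  intros HNN' Hnd [x [e [He Hsub]]]. apply Hnd. exists x, e. split; [exact He|].
  intros y Hy eps Heps. destruct (Hsub y Hy eps Heps) as [a [Ha Hya]].
  exists a. split; [apply HNN', Ha | exact Hya].
Qed.

Lemma residual_of_nowhere_dense_compl P : nowhere_dense d (fun x => ~ P x) -> residual d P.
Proof.
  intro Hnd. exists (fun _ x => ~ P x). split; [intros _; exact Hnd|].
  intro x. split; [intro H; exists O; exact H | intros [_ H]; exact H].
Qed.

Lemma residual_full : residual d (fun _ => True).
Proof.
  apply residual_of_nowhere_dense_compl. intros [x [e [He Hsub]]].
  assert (Hx : ball d x e x) by (unfold ball; rewrite dist_refl; exact He).
  destruct (Hsub x Hx e He) as [a [Ha _]]. exact (Ha I).
Qed.

Lemma residual_mono P Q : (forall x, P x -> Q x) -> residual d P -> residual d Q.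
Proof.
  intros HPQ [N [Hnd HN]]. exists (fun n x => N n x /\ ~ Q x). split.
  - intro n. apply (nowhere_dense_subset _ (N n)); [intros x []; auto | apply Hnd].
  - intro x. split; [|intros [_ [_ HQ]]; exact HQ].
    intro HQ. destruct (proj1 (HN x) (fun HP => HQ (HPQ x HP))) as [n Hn]. exists n; auto.
Qed.

Lemma residual_countable_inter (P : nat -> T -> Prop) :
  (forall k, residual d (P k)) -> residual d (fun x => forall k, P k x).
Proof.
  intro HP. destruct (choice _ HP) as [N HN].
  exists (fun n => N (fst (Cantor.of_nat n)) (snd (Cantor.of_nat n))). split.
  - intro n. apply HN.
  - intro x. split.
    + intro Hx. apply not_all_ex_not in Hx as [k Hk].
      destruct (proj1 (proj2 (HN k) x) Hk) as [m Hkm].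
      exists (Cantor.to_nat (k, m)). rewrite Cantor.cancel_of_to. exact Hkm.
    + intros [n Hn] Hall. apply (proj2 (proj2 (HN (fst (Cantor.of_nat n))) x));
        [exists (snd (Cantor.of_nat n)); exact Hn | apply Hall].
Qed.

End MetricFacts.

Section Baire.
Context {T : Type} (d : T -> T -> R) (Hm : is_metric d).
Hypothesis Hcomplete : forall u, cauchy_seq d u -> exists l, seq_converges d u l.

Lemma nested_balls_telescope (y : nat -> T) (s : nat -> R) :
  (forall n, d (y (S n)) (y n) + s (S n) <= s n) ->
  forall k n, (k <= n)%nat -> d (y n) (y k) + s n <= s k.
Proof.
  intros Hnest k n Hkn. induction Hkn as [|n _ IH]; [rewrite (dist_refl d Hm); lra|].
  pose proof (Hnest n). pose proof (dist_triangle d Hm (y (S n)) (y n) (y k)). lra.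
Qed.

Lemma nested_balls_limit (y : nat -> T) (s : nat -> R) :
  (forall n, 0 <= s n) -> (forall n, d (y (S n)) (y n) + s (S n) <= s n) ->
  (forall eps, 0 < eps -> exists n, s n < eps) ->
  exists l, forall k, d l (y k) <= s k.
Proof.
  intros Hpos Hnest Hsmall. pose proof (nested_balls_telescope y s Hnest) as Htel.
  assert (Hcauchy : cauchy_seq d y).
  { intros eps Heps. destruct (Hsmall (eps / 2)) as [N HN]; [lra|]. exists N.
    intros m n Hm' Hn'. pose proof (Htel N m Hm'). pose proof (Htel N n Hn').
    pose proof (dist_triangle d Hm (y m) (y N) (y n)). pose proof (dist_sym d Hm (y N) (y n)).
    pose proof (Hpos m). pose proof (Hpos n). lra. }
  destruct (Hcomplete y Hcauchy) as [l Hl]. exists l. intro k.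
  apply Rnot_lt_le. intro Hfar. destruct (Hl (d l (y k) - s k)) as [M HM]; [lra|].
  specialize (HM (Nat.max M k) (Nat.le_max_l M k)).
  pose proof (Htel k (Nat.max M k) (Nat.le_max_r M k)). pose proof (Hpos (Nat.max M k)).
  pose proof (dist_triangle d Hm l (y (Nat.max M k)) (y k)).
  pose proof (dist_sym d Hm l (y (Nat.max M k))). lra.
Qed.

Lemma halving_vanishes (s : nat -> R) :
  (forall n, 0 <= s n) -> (forall n, s (S n) <= s n / 2) ->
  forall eps, 0 < eps -> exists n, s n < eps.
Proof.
  intros Hpos Hhalf eps Heps.
  assert (Hgeom : forall n, s n <= s O * (/ 2) ^ n).
  { induction n as [|n IH]; simpl; [lra|]. pose proof (Hhalf n). lra. }
  destruct (pow_lt_1_zero (/ 2) ltac:(rewrite Rabs_pos_eq; lra) (eps / (s O + 1)))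
    as [N HN].
  { pose proof (Hpos O). apply Rdiv_lt_0_compat; lra. }
  exists N. specialize (HN N (le_n N)). rewrite Rabs_pos_eq in HN by (apply pow_le; lra).
  pose proof (Hgeom N). pose proof (Hpos O). pose proof (pow_lt (/ 2) N ltac:(lra)).
  apply Rmult_lt_compat_r with (r := s O + 1) in HN; [|lra].
  unfold Rdiv in HN. rewrite Rmult_assoc, Rinv_l, Rmult_1_r in HN by lra. nra.
Qed.

Lemma closed_ball_avoiding (E : T -> Prop) (y : T) (s : R) :
  subset (closure d E) E -> 0 < s -> ~ subset (ball d y s) E ->
  exists z s', 0 < s' /\ s' <= s / 2 /\ d z y + s' <= s /\
    forall w, d w z <= s' -> ~ E w.
Proof.
  intros Hclosed Hs Hnot.
  assert (Hz : exists z, d z y < s /\ ~ E z).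
  { apply NNPP. intro Hno. apply Hnot. intros z Hz. apply NNPP. intro HEz.
    apply Hno. exists z. split; [exact Hz | exact HEz]. }
  destruct Hz as [z [Hzy HEz]].
  assert (Hgap : exists rho, 0 < rho /\ forall a, E a -> rho <= d z a).
  { apply NNPP. intro Hno. apply HEz, Hclosed. intros eps Heps. apply NNPP. intro Hfar.
    apply Hno. exists eps. split; [exact Heps|]. intros a Ha.
    apply Rnot_lt_le. intro Hlt. apply Hfar. exists a. split; [exact Ha | exact Hlt]. }
  destruct Hgap as [rho [Hrho Hfar]].
  exists z, (Rmin (rho / 2) ((s - d z y) / 2)).
  pose proof (Rmin_l (rho / 2) ((s - d z y) / 2)).
  pose proof (Rmin_r (rho / 2) ((s - d z y) / 2)). pose proof (dist_nonneg d Hm z y).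
  assert (0 < Rmin (rho / 2) ((s - d z y) / 2)) by (apply Rmin_glb_lt; lra).
  repeat split; try lra. intros w Hw HEw. specialize (Hfar w HEw).
  rewrite (dist_sym d Hm) in Hfar. lra.
Qed.

(* Cantor's nested-ball argument: if no ball inside [ball x r] lies in a single [E N],
   shrinking closed balls can be chosen avoiding [E 0], [E 1], ..., and their common
   point is covered by none of the [E N]. *)
Theorem baire_category (E : nat -> T -> Prop) :
  (forall N, subset (closure d (E N)) (E N)) -> (forall z, exists N, E N z) ->
  forall x r, 0 < r -> exists N y s, 0 < s /\ subset (ball d y s) (E N) /\
    subset (ball d y s) (ball d x r).
Proof.
  intros Hclosed Hcover x r Hr. apply NNPP. intro Hno.
  set (Inside := fun p : T * R =>
    0 < snd p /\ forall w, d w (fst p) <= snd p -> d w x < r).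
  set (Shrinks := fun (k : nat) (p p' : T * R) =>
    0 < snd p' /\ snd p' <= snd p / 2 /\ d (fst p') (fst p) + snd p' <= snd p /\
    forall w, d w (fst p') <= snd p' -> ~ E k w).
  assert (Hstep : forall kp : nat * (T * R), exists p',
      Inside (snd kp) -> Shrinks (fst kp) (snd kp) p').
  { intros [k [y s]]. destruct (classic (Inside (y, s))) as [[Hs Hin]|Hout];
      [|exists (y, s); tauto].
    simpl in Hs, Hin. destruct (closed_ball_avoiding (E k) y s (Hclosed k) Hs) as [z [s' Hz]].
    { intro Hsub. apply Hno. exists k, y, s. split; [exact Hs|]. split; [exact Hsub|].
      intros w Hw. unfold ball in *. apply Hin. lra. }
    exists (z, s'). intros _. exact Hz. }
  destruct (choice _ Hstep) as [f Hf].
  set (p := nat_rect (fun _ => (T * R)%type) (x, r / 2) (fun n q => f (n, q))).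
  assert (Hp_succ : forall n, p (S n) = f (n, p n)) by reflexivity.
  assert (Hinside : forall n, Inside (p n)).
  { induction n as [|n IH]; [split; simpl; [lra | intros; lra]|].
    rewrite Hp_succ. destruct (Hf (n, p n) IH) as [Hpos [_ [Hsub _]]].
    split; [exact Hpos|]. intros w Hw. apply (proj2 IH).
    simpl in Hsub. pose proof (dist_triangle d Hm w (fst (f (n, p n))) (fst (p n))). lra. }
  assert (Hshrink : forall n, Shrinks n (p n) (p (S n))).
  { intro n. rewrite Hp_succ. exact (Hf (n, p n) (Hinside n)). }
  destruct (nested_balls_limit (fun n => fst (p n)) (fun n => snd (p n))) as [l Hl].
  - intro n. apply Rlt_le, Hinside.
  - intro n. apply Hshrink.
  - apply halving_vanishes; [intro n; apply Rlt_le, Hinside | intro n; apply Hshrink].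
  - destruct (Hcover l) as [N HN]. destruct (Hshrink N) as [_ [_ [_ Havoid]]].
    exact (Havoid l (Hl (S N)) HN).
Qed.

End Baire.

Section ApproximatedFamily.
Context {X L : Type} (dX : X -> X -> R) (dL : L -> L -> R).
Hypotheses (HmX : is_metric dX) (HmL : is_metric dL)
  (HcL : forall u, cauchy_seq dL u -> exists l, seq_converges dL u l).
Variables (F : nat -> L -> X -> Prop) (G : L -> X -> Prop).
Hypothesis approx_sub : forall n l, subset (G l) (F n l).
Hypothesis approx_conv : forall l eps, 0 < eps ->
  exists N, forall n, (N <= n)%nat -> hsemi_small dX (F n l) (G l) eps.
Hypothesis approx_hcont : forall n l0, hcont_at dX dL (F n) l0.

Definition tail_hsemi_le (e : R) (N : nat) (l : L) : Prop :=
  forall p q, (N <= p)%nat -> (N <= q)%nat -> hsemi_le dX (F p l) (F q l) e.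

Definition tail_interior (e : R) (l : L) : Prop :=
  exists N r, 0 < r /\ subset (ball dL l r) (tail_hsemi_le e N).

Lemma tail_hsemi_le_closed e N : subset (closure dL (tail_hsemi_le e N)) (tail_hsemi_le e N).
Proof.
  intros l Hl p q Hp Hq eta Heta.
  destruct (approx_hcont p l (eta / 3)) as [dp [Hdp Hcp]]; [lra|].
  destruct (approx_hcont q l (eta / 3)) as [dq [Hdq Hcq]]; [lra|].
  destruct (Hl (Rmin dp dq)) as [l' [Htail Hll']]; [apply Rmin_glb_lt; lra|].
  rewrite (dist_sym dL HmL) in Hll'.
  pose proof (Rmin_l dp dq). pose proof (Rmin_r dp dq).
  destruct (Hcp l' ltac:(lra)) as [_ Hp_near]. destruct (Hcq l' ltac:(lra)) as [Hq_near _].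
  replace (e + eta) with (eta / 3 + (e + eta / 3) + eta / 3) by field.
  apply (hsemi_small_trans dX HmX _ (F q l')); [|exact Hq_near].
  apply (hsemi_small_trans dX HmX _ (F p l')); [exact Hp_near|].
  apply Htail; [exact Hp | exact Hq | lra].
Qed.

Lemma tail_hsemi_le_cover e : 0 < e -> forall l, exists N, tail_hsemi_le e N l.
Proof.
  intros He l. destruct (approx_conv l e He) as [N HN]. exists N.
  intros p q Hp Hq eta Heta.
  apply (hsemi_small_mono dX _ _ e); [lra|].
  intros a Ha. destruct (HN p Hp a Ha) as [c [Hc Hac]].
  exists c. split; [apply approx_sub, Hc | exact Hac].
Qed.

Lemma tail_hsemi_le_limit e N l : tail_hsemi_le e N l -> hsemi_le dX (F N l) (G l) e.
Proof.
  intros Htail eta Heta. destruct (approx_conv l (eta / 2)) as [p Hp]; [lra|].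
  replace (e + eta) with ((e + eta / 2) + eta / 2) by field.
  apply (hsemi_small_trans dX HmX _ (F (Nat.max N p) l)).
  - apply Htail; [lia | lia | lra].
  - apply Hp. lia.
Qed.

Lemma approx_upper_semicontinuous l0 eps : 0 < eps ->
  exists delta, 0 < delta /\ forall l, dL l l0 < delta -> hsemi_small dX (G l) (G l0) eps.
Proof.
  intros Heps. destruct (approx_conv l0 (eps / 2)) as [N HN]; [lra|].
  destruct (approx_hcont N l0 (eps / 2)) as [delta [Hdelta Hclose]]; [lra|].
  exists delta. split; [exact Hdelta|]. intros l Hl.
  replace eps with (eps / 2 + eps / 2) by field.
  apply (hsemi_small_trans dX HmX _ (F N l0)); [|apply HN, le_n].
  apply (hsemi_small_sub_l dX _ (F N l)); [apply approx_sub | apply (Hclose l Hl)].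
Qed.

Lemma approx_lower_semicontinuous_at_tail_interior e l0 : 0 < e -> tail_interior e l0 ->
  exists delta, 0 < delta /\ forall l, dL l l0 < delta -> hsemi_small dX (G l0) (G l) (3 * e).
Proof.
  intros He [N [r [Hr Hsub]]].
  destruct (approx_hcont N l0 e He) as [delta [Hdelta Hclose]].
  exists (Rmin r delta). split; [apply Rmin_glb_lt; lra|].
  intros l Hl. pose proof (Rmin_l r delta). pose proof (Rmin_r r delta).
  assert (Htail : tail_hsemi_le e N l) by (apply Hsub; unfold ball; lra).
  replace (3 * e) with (e / 2 + (e + 3 * e / 2)) by field.
  apply (hsemi_small_trans dX HmX _ (F N l0)); [apply hsemi_small_of_subset; auto; lra|].
  apply (hsemi_small_trans dX HmX _ (F N l)); [apply (Hclose l); lra|].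
  apply (hsemi_le_small _ _ _ e); [lra | apply tail_hsemi_le_limit, Htail].
Qed.

Lemma tail_interior_compl_nowhere_dense e : 0 < e ->
  nowhere_dense dL (fun l => ~ tail_interior e l).
Proof.
  intros He [x [r [Hr Hsub]]].
  destruct (baire_category dL HmL HcL (tail_hsemi_le e) (tail_hsemi_le_closed e)
              (tail_hsemi_le_cover e He) x r Hr) as [N [y [s [Hs [HyE Hyx]]]]].
  assert (Hy : closure dL (fun l => ~ tail_interior e l) y).
  { apply Hsub, Hyx. unfold ball. rewrite (dist_refl dL HmL). exact Hs. }
  destruct (Hy (s / 2)) as [b [Hb Hyb]]; [lra|].
  apply Hb. exists N, (s / 2). split; [lra|].
  intros z Hz. apply HyE. unfold ball in *.
  pose proof (dist_triangle dL HmL z b y). pose proof (dist_sym dL HmL b y). lra.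
Qed.

Theorem approx_limit_residual_hcont : residual dL (hcont_at dX dL G).
Proof.
  apply (residual_mono dL (fun l => forall m, tail_interior (/ INR (S m)) l)).
  - intros l0 Hint eps Heps.
    destruct (archimed_cor1 (eps / 3)) as [[|m] [Hm Hm_pos]]; [lra | lia |].
    assert (He : 0 < / INR (S m)) by (apply Rinv_0_lt_compat, lt_0_INR; lia).
    destruct (approx_lower_semicontinuous_at_tail_interior _ l0 He (Hint m))
      as [d1 [Hd1 Hlower]].
    destruct (approx_upper_semicontinuous l0 eps Heps) as [d2 [Hd2 Hupper]].
    exists (Rmin d1 d2). split; [apply Rmin_glb_lt; auto|].
    intros l Hl. pose proof (Rmin_l d1 d2). pose proof (Rmin_r d1 d2). split.
    + apply Hupper. lra.
    + apply (hsemi_small_mono dX _ _ (3 * / INR (S m))); [lra | apply Hlower; lra].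
  - apply residual_countable_inter. intro m. apply residual_of_nowhere_dense_compl.
    apply tail_interior_compl_nowhere_dense, Rinv_0_lt_compat, lt_0_INR. lia.
Qed.

End ApproximatedFamily.

Section PullbackImages.
Context {X Lam : Type} (dX : X -> X -> R) (dL : Lam -> Lam -> R) (HmX : is_metric dX).
Variables (S : Lam -> R -> R -> X -> X) (A : Lam -> R -> X -> Prop) (D : X -> Prop).
Hypothesis HS : forall lam, is_process dX (S lam).
Hypothesis L1 : forall lam, is_pullback_attractor dX (S lam) (A lam).
Hypothesis HD_bounded : is_bounded dX D.
Hypothesis HD_absorbs : forall lam t, subset (A lam t) D.
Hypothesis HD_uniform : forall s t, s <= t -> forall lam0 eps, 0 < eps ->
  exists delta, 0 < delta /\ forall lam, dL lam lam0 < delta -> forall x, D x ->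
    dX (S lam t s x) (S lam0 t s x) < eps.

Definition pullback_image (q : R) (n : nat) (lam : Lam) : X -> Prop :=
  fun y => exists b, D b /\ y = S lam q (q - INR n) b.

Lemma attractor_sub_pullback_image q n lam : subset (A lam q) (pullback_image q n lam).
Proof.
  intros y Hy. destruct (L1 lam) as [_ [Hinv _]]. pose proof (pos_INR n).
  destruct (proj1 (Hinv q (q - INR n) ltac:(lra) y) Hy) as [x [Hx ->]].
  exists x. split; [apply (HD_absorbs lam (q - INR n)), Hx | reflexivity].
Qed.

Lemma pullback_image_attracted q lam eps : 0 < eps ->
  exists N, forall n, (N <= n)%nat -> hsemi_small dX (pullback_image q n lam) (A lam q) eps.
Proof.
  intros Heps. destruct (L1 lam) as [_ [_ [Hattr _]]].
  destruct (Hattr D HD_bounded q eps Heps) as [s0 Hs0].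
  destruct (INR_unbounded (q - s0)) as [N HN]. exists N. intros n Hn.
  apply le_INR in Hn. pose proof (pos_INR N). apply (Hs0 (q - INR n)); lra.
Qed.

Lemma pullback_image_hcont q n lam0 : hcont_at dX dL (pullback_image q n) lam0.
Proof.
  intros eps Heps. pose proof (pos_INR n).
  destruct (HD_uniform (q - INR n) q ltac:(lra) lam0 eps Heps) as [delta [Hdelta Hclose]].
  exists delta. split; [exact Hdelta|]. intros lam Hl. split.
  - intros y [b [Hb ->]]. exists (S lam0 q (q - INR n) b).
    split; [exists b; auto | apply Hclose; auto].
  - intros y [b [Hb ->]]. exists (S lam q (q - INR n) b).
    split; [exists b; auto | rewrite (dist_sym dX HmX); apply Hclose; auto].
Qed.

Lemma attractor_hcont_forward q t lam0 : q <= t ->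
  hcont_at dX dL (fun lam => A lam q) lam0 -> hcont_at dX dL (fun lam => A lam t) lam0.
Proof.
  intros Hqt Hcont eps Heps.
  destruct (L1 lam0) as [Hcpt0 [Hinv0 _]].
  destruct (compact_uniform_continuity dX HmX (A lam0 q) (S lam0 t q) (Hcpt0 q))
    with (eps := eps / 2) as [eta [Heta Hunif]]; [|lra|].
  { intros c _ e He. destruct (HS lam0) as [_ [_ Hjoint]].
    destruct (Hjoint c t q Hqt e He) as [delta [Hdelta Hnear]].
    exists delta. split; [exact Hdelta|]. intros y Hy.
    apply Hnear; [exact Hqt | exact Hy | |]; rewrite Rminus_diag, Rabs_R0; exact Hdelta. }
  destruct (Hcont eta Heta) as [d1 [Hd1 Hq_near]].
  destruct (HD_uniform q t Hqt lam0 (eps / 2)) as [d2 [Hd2 Hflow]]; [lra|].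
  exists (Rmin d1 d2). split; [apply Rmin_glb_lt; auto|].
  intros lam Hl. pose proof (Rmin_l d1 d2). pose proof (Rmin_r d1 d2).
  destruct (Hq_near lam ltac:(lra)) as [Hfwd Hbwd].
  destruct (L1 lam) as [_ [Hinv _]].
  split.
  - intros y Hy. destruct (proj1 (Hinv t q Hqt y) Hy) as [x [Hx ->]].
    destruct (Hfwd x Hx) as [c [Hc Hxc]]. exists (S lam0 t q c).
    split; [apply (proj2 (Hinv0 t q Hqt _)); exists c; auto|].
    pose proof (Hflow lam ltac:(lra) x (HD_absorbs _ _ x Hx)).
    pose proof (Hunif c x Hc ltac:(rewrite (dist_sym dX HmX); lra)).
    pose proof (dist_triangle dX HmX (S lam t q x) (S lam0 t q x) (S lam0 t q c)).
    pose proof (dist_sym dX HmX (S lam0 t q x) (S lam0 t q c)). lra.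
  - intros y Hy. destruct (proj1 (Hinv0 t q Hqt y) Hy) as [c [Hc ->]].
    destruct (Hbwd c Hc) as [x [Hx Hcx]]. exists (S lam t q x).
    split; [apply (proj2 (Hinv t q Hqt _)); exists x; auto|].
    pose proof (Hflow lam ltac:(lra) x (HD_absorbs _ _ x Hx)).
    pose proof (Hunif c x Hc Hcx).
    pose proof (dist_triangle dX HmX (S lam0 t q c) (S lam0 t q x) (S lam t q x)).
    pose proof (dist_sym dX HmX (S lam0 t q x) (S lam t q x)). lra.
Qed.

End PullbackImages.

Theorem theorem3p3
  (X : Type) (dX : X -> X -> R) (HX : complete_metric dX)
  (Lam : Type) (dL : Lam -> Lam -> R) (HL : complete_metric dL)
  (S : Lam -> R -> R -> X -> X) (HS : forall lam, is_process dX (S lam))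
  (A : Lam -> R -> X -> Prop)
  (L1 : forall lam, is_pullback_attractor dX (S lam) (A lam))
  (Hyp :
     (exists D : X -> Prop,
        is_compact dX D /\
        (forall lam t, subset (A lam t) D) /\
        (forall s t, s <= t -> forall K, is_compact dX K ->
           forall lam0 eps, 0 < eps -> exists delta, 0 < delta /\
             forall lam, dL lam lam0 < delta -> forall x, K x ->
               dX (S lam t s x) (S lam0 t s x) < eps))
     \/
     (exists D : X -> Prop,
        is_bounded dX D /\
        (forall lam t, subset (A lam t) D) /\
        (forall s t, s <= t -> forall K, is_bounded dX K ->
           forall lam0 eps, 0 < eps -> exists delta, 0 < delta /\
             forall lam, dL lam lam0 < delta -> forall x, K x ->
               dX (S lam t s x) (S lam0 t s x) < eps) /\
        (forall lam0 t, exists delta, 0 < delta /\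
           is_compact dX (closure dX (fun x =>
             exists lam, ball dL lam0 delta lam /\ A lam t x)))))
  : exists Lstar : Lam -> Prop,
      residual dL Lstar /\
      forall t lam0, Lstar lam0 ->
        forall eps, 0 < eps -> exists delta, 0 < delta /\
          forall lam, dL lam lam0 < delta ->
            hdist_small dX (A lam t) (A lam0 t) eps.
Proof.
  destruct HX as [HmX _]. destruct HL as [HmL HcL].
  destruct (classic (inhabited X)) as [[x0]|Hempty].
  2: { exists (fun _ => True). split; [exact (residual_full dL HmL)|].
       intros t lam0 _ eps Heps. exists 1. split; [lra|]. intros lam _.
       split; intros a _; destruct (Hempty (inhabits a)). }
  assert (HD : exists D, is_bounded dX D /\ (forall lam t, subset (A lam t) D) /\
     forall s t, s <= t -> forall lam0 eps, 0 < eps -> exists delta, 0 < delta /\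
       forall lam, dL lam lam0 < delta -> forall x, D x ->
         dX (S lam t s x) (S lam0 t s x) < eps).
  { destruct Hyp as [[D [HDc [HDA HDu]]]|[D [HDb [HDA [HDu _]]]]]; exists D.
    - split; [exact (compact_bounded dX HmX x0 D HDc)|].
      split; [exact HDA|]. intros s t Hst. exact (HDu s t Hst D HDc).
    - split; [exact HDb|]. split; [exact HDA|]. intros s t Hst. exact (HDu s t Hst D HDb). }
  destruct HD as [D [HDb [HDA HDu]]].
  exists (fun lam0 => forall k : nat, hcont_at dX dL (fun lam => A lam (- INR k)) lam0).
  split.
  - apply residual_countable_inter. intro k.
    apply (approx_limit_residual_hcont dX dL HmX HmL HcL (pullback_image S D (- INR k))).
    + exact (attractor_sub_pullback_image dX S A D L1 HDA (- INR k)).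
    + exact (pullback_image_attracted dX S A D L1 HDb (- INR k)).
    + exact (pullback_image_hcont dX dL HmX S D HDu (- INR k)).
  - intros t lam0 Hcont. destruct (INR_unbounded (- t)) as [k Hk].
    apply (attractor_hcont_forward dX dL HmX S A D HS L1 HDA HDu (- INR k)); [lra|].
    apply Hcont.
Qed.
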